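(* Let $n \ge 2$, let $A$ be an $n \times n$ real matrix with $\mathrm{Tr}(AA^t) = n$, let $O$ be distributed according to Haar measure on $O(n,\mathbb{R})$, and let $W = \mathrm{Tr}(AO)$. Let $f:\mathbb{R}\to\mathbb{R}$ be a twice differentiable function with bounded second derivative. Then \[ \mathbb{E}[f'(W) - Wf(W)] = \mathbb{E}\left[ \frac{p_2(AO) - 1}{n-1} f'(W) \right], \] where $p_2(AO) = \mathrm{Tr}((AO)^2)$. *)

From HB Require Import structures.
From mathcomp Require Import all_boot all_order all_algebra.
From mathcomp Require Import all_classical all_reals all_analysis.
Set Implicit Arguments. Unset Strict Implicit. Unset Printing Implicit Defensive.
Import Order.TTheory GRing.Theory Num.Theory.
Import numFieldNormedType.Exports.
Local Open Scope ring_scope.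

Definition orthogonal_mx (R : realType) (n : nat) (M : 'M[R]_n) : Prop :=
  M *m M^T = 1%:M.

(* O : T -> 'M[R]_n is a random matrix on the probability space (T, P)
   distributed according to Haar measure on O(n, R): O takes values in O(n),
   its entries are measurable, and its law is invariant under left
   multiplication by any orthogonal matrix (invariance of the law is stated
   through expectations of all bounded continuous test functions, which
   determine a Borel law on the metric space of matrices). By uniqueness of
   the (normalised) Haar measure this characterises the Haar law. *)
Definition haar_orthogonal (R : realType) (d : measure_display)
    (T : measurableType d) (P : probability T R) (n : nat)
    (O : T -> 'M[R]_n) : Prop :=
  [/\ forall w, orthogonal_mx (O w),
      forall i j, measurable_fun setT (fun w => O w i j) &
      forall U : 'M[R]_n, orthogonal_mx U ->
      forall g : 'M[R]_n -> R, continuous g ->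
        (exists M : R, forall x, `|g x| <= M) ->
        (\int[P]_w (g (U *m O w))%:E = \int[P]_w (g (O w))%:E)%E ].

Definition p2 (R : realType) (n : nat) (M : 'M[R]_n) : R := \tr (M *m M).

From HB Require Import structures.
From mathcomp Require Import all_boot all_order all_algebra.
From mathcomp Require Import all_classical all_reals all_analysis.
From mathcomp Require Import ring measurable_realfun.
Import Order.TTheory GRing.Theory Num.Theory.
Import numFieldNormedType.Exports.
Local Open Scope ring_scope.
Local Open Scope classical_set_scope.
Set Implicit Arguments. Unset Strict Implicit. Unset Printing Implicit Defensive.

(* For a skew matrix K with K^3 = -K the matrices
   R(t) = 1 + sin t K + (1 - cos t) K^2 form a one-parameter group of
   rotations, so by Haar invariance E[f(Tr(A R(t) O)) Tr(A K R(t) O)] does not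
   depend on t. Differentiating at t = 0 gives
   E[f(W) Tr(A K^2 O) + f'(W) Tr(A K O)^2] = 0.
   Summing over the skew units K = E_ij - E_ji, the first terms add up to
   -2(n-1) W f(W) and, since Tr(A A^t) = n, the second ones to
   2(n - p_2(AO)) f'(W); dividing by 2(n-1) gives the identity. *)

Section rotation_path.
Variable R : realType.

(* [rot_path a al be t] is Tr(C R(t) M) when a, al, be are the traces of
   C M, C K M and C K^2 M (see [mxtrace_mul_rot_mx]). *)
Definition rot_path (a al be t : R) := a + al * sin t + be * (1 - cos t).
Definition rot_path1 (al be t : R) := al * cos t + be * sin t.

Lemma is_derive_rot_path (a al be t : R) :
  is_derive t 1 (rot_path a al be) (rot_path1 al be t).
Proof.
have -> : rot_path a al be = cst a + al \*: sin + be \*: (cst 1 - cos).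
  by apply/funext => s; rewrite /rot_path.
by apply: is_derive_eq; rewrite /rot_path1 add0r sub0r opprK.
Qed.

Lemma is_derive_rot_path1 (al be t : R) :
  is_derive t 1 (rot_path1 al be) (rot_path1 be (- al) t).
Proof.
have -> : rot_path1 al be = al \*: cos + be \*: sin by apply/funext.
by apply: is_derive_eq; rewrite /rot_path1 scalerN -mulNr addrC.
Qed.

Lemma rot_path0 (a al be : R) : rot_path a al be 0 = a.
Proof. by rewrite /rot_path sin0 cos0 subrr !mulr0 !addr0. Qed.

Lemma rot_path10 (al be : R) : rot_path1 al be 0 = al.
Proof. by rewrite /rot_path1 sin0 cos0 mulr0 mulr1 addr0. Qed.

Lemma rot_path_opp (al be t : R) : rot_path al be (- al) t = rot_path1 al be t.
Proof. by rewrite /rot_path /rot_path1; ring. Qed.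

Lemma norm_rot_path1_le (al be t S : R) : `|al| <= S -> `|be| <= S ->
  `|rot_path1 al be t| <= S *+ 2.
Proof.
move=> hal hbe; rewrite /rot_path1 mulr2n.
apply: (le_trans (ler_normD _ _)); rewrite !normrM.
by apply: lerD; rewrite -[S]mulr1; apply: ler_pM; rewrite ?cos_max ?sin_max.
Qed.

Lemma norm_rot_path_le (a al be t S : R) :
  `|a| <= S -> `|al| <= S -> `|be| <= S -> `|rot_path a al be t| <= S *+ 4.
Proof.
move=> ha hal hbe; have S0 : 0 <= S := le_trans (normr_ge0 _) ha.
have h1c : `|1 - cos t| <= 2.
  by apply: (le_trans (ler_normB _ _)); rewrite normr1 lerD2l cos_max.
apply: (le_trans (ler_normD _ _)).
rewrite (_ : S *+ 4 = S + S + S * 2); last by rewrite -mulr_natr; ring.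
apply: lerD; last by rewrite normrM; apply: ler_pM.
apply: (le_trans (ler_normD _ _)); apply: lerD => //.
by rewrite normrM -[S]mulr1; apply: ler_pM; rewrite ?sin_max.
Qed.

Lemma continuous_bounded_on_ball (g : R -> R) (r : R) : continuous g ->
  exists C, forall x, `|x| <= r -> `|g x| <= C.
Proof.
move=> cg; have [r0|r0] := ltP r 0.
  by exists 0 => x /(le_trans (normr_ge0 x)); rewrite leNgt r0.
have rr : - r <= r by rewrite lerNl (le_trans _ r0) // oppr_le0.
have /(EVT_max rr) [c _ hc] : {within `[(- r), r], continuous (fun x => `|g x|)}.
  apply: continuous_subspaceT => x.
  exact: continuous_comp (cg x) (@norm_continuous _ R^o _).
by exists `|g c| => x xr; apply: hc; rewrite in_itv /= -ler_norml.
Qed.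

Lemma derivable_continuous (g : R -> R) : (forall x, derivable g x 1) -> continuous g.
Proof. by move=> hg x; apply/differentiable_continuous/derivable1_diffP. Qed.

Variable f : R -> R.
Hypothesis hf : forall x, derivable f x 1.
Hypothesis hf1 : forall x, derivable (derive1 f) x 1.

Definition stein_path (a al be t : R) := f (rot_path a al be t) * rot_path1 al be t.

Definition stein_path1 (a al be t : R) :=
  f (rot_path a al be t) * rot_path1 be (- al) t +
  rot_path1 al be t * (derive1 f (rot_path a al be t) * rot_path1 al be t).

Lemma is_derive_stein_path (a al be t : R) :
  is_derive t 1 (stein_path a al be) (stein_path1 a al be t).
Proof.
have hfx : is_derive (rot_path a al be t) 1 f (derive1 f (rot_path a al be t)).
  by rewrite derive1E; apply: derivableP.
have := is_derive1_comp hfx (is_derive_rot_path a al be t).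
have := is_derive_rot_path1 al be t.
have -> : stein_path a al be = (f \o rot_path a al be) * rot_path1 al be by [].
by move=> h1 h2; apply: is_derive_eq.
Qed.

Lemma stein_path1_bounded (S : R) : exists C, forall a al be t,
  `|a| <= S -> `|al| <= S -> `|be| <= S -> `|stein_path1 a al be t| <= C.
Proof.
have [F0 hF0] := continuous_bounded_on_ball (S *+ 4) (derivable_continuous hf).
have [F1 hF1] := continuous_bounded_on_ball (S *+ 4) (derivable_continuous hf1).
exists (F0 * S *+ 2 + S *+ 2 * (F1 * S *+ 2)) => a al be t ha hal hbe.
have hx := norm_rot_path_le t ha hal hbe.
have hx1 := norm_rot_path1_le t hal hbe.
apply: (le_trans (ler_normD _ _)); rewrite !normrM -!mulrnAr.
apply: lerD; apply: ler_pM => //; rewrite ?hF0 //.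
  by apply: norm_rot_path1_le; rewrite ?normrN.
by apply: ler_pM => //; rewrite hF1.
Qed.

End rotation_path.

Section rotation_matrix.
Variables (R : realType) (n : nat).
Implicit Types (C K M U : 'M[R]_n).

Lemma orthogonal_mxM U M :
  orthogonal_mx U -> orthogonal_mx M -> orthogonal_mx (U *m M).
Proof.
rewrite /orthogonal_mx => hU hM.
by rewrite trmx_mul mulmxA -(mulmxA U) hM mulmx1 hU.
Qed.

Lemma orthogonal_mx_entry_le M i j : orthogonal_mx M -> `|M i j| <= 1.
Proof.
move=> hM; have : (M *m M^T) i i = 1 by rewrite hM mxE eqxx.
rewrite mxE (bigD1 j) //= mxE => hii.
have : M i j ^+ 2 <= 1.
  rewrite -hii expr2 lerDl; apply: sumr_ge0 => k _.
  by rewrite mxE -expr2 sqr_ge0.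
by rewrite -real_normK ?num_real // expr_le1.
Qed.

Lemma mxtrace_mulE C M : \tr (C *m M) = \sum_i \sum_k C i k * M k i.
Proof. by apply: eq_bigr => i _; rewrite mxE. Qed.

Lemma norm_mxtrace_mul_orthogonal_le C M : orthogonal_mx M ->
  `|\tr (C *m M)| <= \sum_i \sum_k `|C i k|.
Proof.
move=> hM; rewrite mxtrace_mulE.
apply: (le_trans (ler_norm_sum _ _ _)); apply: ler_sum => i _.
apply: (le_trans (ler_norm_sum _ _ _)); apply: ler_sum => k _.
by rewrite normrM ler_piMr // orthogonal_mx_entry_le.
Qed.

Lemma continuous_mxtrace_mul C : continuous (fun M : 'M[R]_n => \tr (C *m M)).
Proof.
rewrite (_ : (fun M => _) = fun M => \sum_i \sum_k C i k * M k i); last first.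
  by apply/funext => M; rewrite mxtrace_mulE.
apply: continuous_big => [|i _]; first exact: add_continuous.
apply: continuous_big => [|k _]; first exact: add_continuous.
move=> M; apply: (@cvgM _ _ (nbhs M) _ (fun _ => C i k) (fun N => N k i)).
  exact: cvg_cst.
exact: coord_continuous.
Qed.

(* Rodrigues' formula: this is exp(tK) when K^3 = -K. *)
Definition rot_mx K (t : R) := 1%:M + sin t *: K + (1 - cos t) *: (K *m K).

Lemma rot_mx0 K : rot_mx K 0 = 1%:M.
Proof. by rewrite /rot_mx sin0 cos0 subrr !scale0r !addr0. Qed.

Lemma rot_mx_orthogonal K t : K^T = - K -> K *m (K *m K) = - K ->
  orthogonal_mx (rot_mx K t).
Proof.
move=> skK cubeK; have hK2T : (K *m K)^T = K *m K.
  by rewrite trmx_mul skK mulmxN mulNmx opprK.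
have hK2K : K *m K *m K = - K by rewrite -mulmxA cubeK.
have hK2K2 : K *m K *m (K *m K) = - (K *m K) by rewrite mulmxA hK2K mulNmx.
rewrite /orthogonal_mx /rot_mx !linearD /= !linearZ /= trmx1 skK hK2T.
rewrite !(mulmxDl, mulmxDr, mul1mx, mulmx1, mulmxN, mulNmx,
  =^~ scalemxAl, =^~ scalemxAr) hK2K hK2K2 cubeK.
move: (K *m K) => K2.
apply/matrixP => i j; rewrite !mxE; apply/eqP; rewrite -subr_eq0; apply/eqP.
transitivity ((1 - (cos t ^+ 2 + sin t ^+ 2)) * K2 i j); first by ring.
by rewrite cos2Dsin2 subrr mul0r.
Qed.

Lemma mxtrace_mul_rot_mx C K M t : \tr (C *m (rot_mx K t *m M)) =
  rot_path (\tr (C *m M)) (\tr (C *m K *m M)) (\tr (C *m K *m K *m M)) t.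
Proof.
rewrite /rot_mx /rot_path !mulmxDl !mulmxDr mul1mx -!scalemxAl -!scalemxAr.
by rewrite !mxtraceD !mxtraceZ !mulmxA; ring.
Qed.

Lemma mxtrace_mul_rot_mx_skew C K M t : K *m (K *m K) = - K ->
  \tr (C *m K *m (rot_mx K t *m M)) =
  rot_path1 (\tr (C *m K *m M)) (\tr (C *m K *m K *m M)) t.
Proof.
move=> cubeK; have CK3 : C *m K *m K *m K = - (C *m K).
  by rewrite -!mulmxA cubeK mulmxN.
by rewrite mxtrace_mul_rot_mx CK3 mulNmx linearN rot_path_opp.
Qed.

End rotation_matrix.

Section skew_units.
Variables (R : realType) (n : nat).
Implicit Types (C M : 'M[R]_n).

Definition skew_unit (i j : 'I_n) : 'M[R]_n := delta_mx i j - delta_mx j i.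

Lemma trmx_skew_unit i j : (skew_unit i j)^T = - skew_unit i j.
Proof. by rewrite /skew_unit linearB /= !trmx_delta opprB. Qed.

Lemma skew_unit_sqr i j : skew_unit i j *m skew_unit i j =
  delta_mx i j *+ (j == i) - delta_mx i i - delta_mx j j + delta_mx j i *+ (i == j).
Proof.
rewrite /skew_unit mulmxBl !mulmxBr !mul_delta_mx_cond !eqxx.
by rewrite opprB addrA !mulr1n addrAC.
Qed.

Lemma skew_unit_cube i j :
  skew_unit i j *m (skew_unit i j *m skew_unit i j) = - skew_unit i j.
Proof.
have [<-|ij] := eqVneq i j; first by rewrite /skew_unit subrr !mul0mx oppr0.
rewrite skew_unit_sqr eq_sym (negPf ij) !mulr0n sub0r addr0 /skew_unit.
rewrite mulmxBl !mulmxBr !mulmxN !mul_delta_mx_cond eq_sym (negPf ij) eqxx.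
by rewrite eqxx !mulr1n !oppr0 !addr0 add0r opprB opprK addrC.
Qed.

Lemma mxtrace_mul_delta C M p q : \tr (C *m delta_mx p q *m M) = (M *m C) q p.
Proof.
rewrite mxtrace_mulC mulmxA mxtrace_mulE (bigD1 q) //=.
rewrite [X in _ + X]big1 => [|k kq]; last first.
  by apply: big1 => l _; rewrite [delta_mx _ _ _ _]mxE (negPf kq) andbF mulr0.
rewrite addr0 (bigD1 p) //= [X in _ + X]big1 => [|l lp]; last first.
  by rewrite [delta_mx _ _ _ _]mxE (negPf lp) mulr0.
by rewrite [delta_mx _ _ _ _]mxE !eqxx mulr1 addr0.
Qed.

Lemma mxtrace_mul_skew_unit C M i j :
  \tr (C *m skew_unit i j *m M) = (M *m C) j i - (M *m C) i j.
Proof. by rewrite /skew_unit mulmxBr mulmxBl linearB /= !mxtrace_mul_delta. Qed.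

Lemma mxtrace_mul_skew_unit_sqr C M i j :
  \tr (C *m skew_unit i j *m skew_unit i j *m M) =
  (M *m C) j i *+ (j == i) - (M *m C) i i - (M *m C) j j + (M *m C) i j *+ (i == j).
Proof.
rewrite -(mulmxA C) skew_unit_sqr.
have [<-|ij] := eqVneq i j; rewrite ?mulr1n ?mulr0n.
all: rewrite !(mulmxDr, mulmxBr, mulmxDl, mulmxBl, mulmx0, mul0mx, mulmxN, mulNmx).
all: by rewrite !(raddfD, raddfN) /= ?mxtrace0 !mxtrace_mul_delta.
Qed.

Lemma sum_mxtrace_mul_skew_unit_sqr C M :
  \sum_i \sum_j \tr (C *m skew_unit i j *m skew_unit i j *m M) =
  (1 - n%:R) *+ 2 * \tr (C *m M).
Proof.
have pick (F : 'I_n -> R) i : \sum_j F j *+ (j == i) = F i.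
  rewrite (bigD1 i) //= eqxx mulr1n big1 ?addr0 // => j /negPf->.
  by rewrite mulr0n.
have pick' (F : 'I_n -> R) i : \sum_j F j *+ (i == j) = F i.
  by rewrite -[RHS]pick; apply: eq_bigr => j _; rewrite eq_sym.
under eq_bigr do under eq_bigr do rewrite mxtrace_mul_skew_unit_sqr.
under eq_bigr do rewrite !(big_split, sumrB) /= pick pick' sumr_const card_ord.
under eq_bigr do rewrite sumrN.
rewrite !big_split /= sumrN sumr_const card_ord sumrMnl sumrN.
rewrite -[\sum_(i < n) (M *m C) i i]/(\tr (M *m C)) mxtrace_mulC.
ring.
Qed.

Lemma sum_sqr_trmx_sub (B : 'M[R]_n) :
  \sum_i \sum_j (B j i - B i j) ^+ 2 = (\tr (B *m B^T) - \tr (B *m B)) *+ 2.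
Proof.
have sq : \tr (B *m B^T) = \sum_i \sum_j B i j ^+ 2.
  by rewrite mxtrace_mulE; apply: eq_bigr => i _; apply: eq_bigr => j _;
    rewrite mxE expr2.
have tr2 : \tr (B *m B) = \sum_i \sum_j B j i * B i j.
  by rewrite mxtrace_mulE; apply: eq_bigr => i _; apply: eq_bigr => j _;
    rewrite mulrC.
have sqT : \sum_i \sum_j B j i ^+ 2 = \sum_i \sum_j B i j ^+ 2.
  exact: exchange_big.
under eq_bigr do under eq_bigr do rewrite sqrrB.
under eq_bigr do rewrite !(big_split, sumrB) /= sumrN sumrMnl.
rewrite !big_split /= sumrN sumrMnl sqT -tr2 -sq.
ring.
Qed.

Lemma sum_mxtrace_mul_skew_unit_exp2 C M :
  \sum_i \sum_j \tr (C *m skew_unit i j *m M) ^+ 2 =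
  (\tr (M *m C *m (M *m C)^T) - \tr (M *m C *m (M *m C))) *+ 2.
Proof.
rewrite -sum_sqr_trmx_sub; apply: eq_bigr => i _; apply: eq_bigr => j _.
by rewrite mxtrace_mul_skew_unit.
Qed.

End skew_units.

Section bounded_integrals.
Variables (R : realType) (d : measure_display) (T : measurableType d).
Variable P : probability T R.

Definition bounded_fun (F : T -> R) := exists C, forall w, `|F w| <= C.

Lemma bounded_funD (F G : T -> R) :
  bounded_fun F -> bounded_fun G -> bounded_fun (F \+ G).
Proof.
move=> [CF hF] [CG hG]; exists (CF + CG) => w.
exact: le_trans (ler_normD _ _) (lerD (hF w) (hG w)).
Qed.

Lemma bounded_funN (F : T -> R) : bounded_fun F -> bounded_fun (\- F).
Proof. by move=> [C hC]; exists C => w; rewrite normrN. Qed.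

Lemma bounded_funM (F G : T -> R) :
  bounded_fun F -> bounded_fun G -> bounded_fun (F \* G).
Proof.
move=> [CF hF] [CG hG]; exists (CF * CG) => w; rewrite normrM.
exact: ler_pM (hF w) (hG w).
Qed.

Lemma integrable_bounded_fun (F : T -> R) :
  measurable_fun setT F -> bounded_fun F -> P.-integrable setT (EFin \o F).
Proof.
move=> mF [C hC]; apply: measurable_bounded_integrable => //.
  exact: le_lt_trans (probability_le1 P measurableT) (ltry 1).
rewrite /bounded_near; near=> M => w _ /=.
apply: le_trans (hC w) _; near: M; exact: nbhs_pinfty_ge (num_real C).
Unshelve. all: end_near. Qed.

Lemma integral_derive_eq0 (F DF : R -> T -> R) (C : R) :
  (forall t, P.-integrable setT (EFin \o F t)) ->
  (forall (t : R) w, is_derive t 1 (F^~ w) (DF t w)) ->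
  measurable_fun setT (DF 0) -> (forall t w, `|DF t w| <= C) ->
  (forall t, \int[P]_w (F t w)%:E = \int[P]_w (F 0 w)%:E)%E ->
  (\int[P]_w (DF 0 w)%:E = 0)%E.
Proof.
move=> iF dF mDF0 hC Fconst.
have C0 : 0 <= C := le_trans (normr_ge0 _) (hC 0 point).
have iDF0 : P.-integrable setT (EFin \o DF 0).
  by apply: integrable_bounded_fun => //; exists C.
have iC : P.-integrable setT (EFin \o cst C).
  by apply: integrable_bounded_fun => //; exists `|C|.
have partialE (t : R) (w : T) : partial1of2 F t w = DF t w.
  by rewrite partial1of2E; have [_ ->] := dF t w.
have derF (t : R) (w : T) : derivable (F^~ w) t 1 by have [] := dF t w.
have partial_le (t : R) (w : T) : `|partial1of2 F t w| <= C by rewrite partialE hC.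
have I01 : `]-1, 1[ (0 : R) by rewrite /= in_itv /= oppr_lt0 ltr01.
have := @differentiation_under_integral R d T P F setT measurableT 0 (-1) 1 I01
  (fun t _ => iF t) (fun t w _ _ => derF t w) (cst C) (fun=> C0) iC
  (fun t w _ _ => partial_le t w).
have -> : (fun t => \int[P]_w F t w)%R = cst (\int[P]_w F 0 w)%R.
  by apply/funext => t; rewrite /Rintegral Fconst.
rewrite derive1_cst (eq_Rintegral _ (fun w _ => partialE 0 w)) => DF0.
by rewrite -(fineK (integrable_fin_num measurableT iDF0)) -/(Rintegral _ _ _) -DF0.
Qed.

End bounded_integrals.

Section haar.
Variables (R : realType) (n : nat) (d : measure_display) (T : measurableType d).
Variables (P : probability T R) (O : T -> 'M[R]_n).
Hypothesis hO : haar_orthogonal P O.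

Let O_orthogonal w : orthogonal_mx (O w). Proof. by case: hO. Qed.

Lemma measurable_mxtrace_mul (C : 'M[R]_n) :
  measurable_fun setT (fun w => \tr (C *m O w)).
Proof.
case: hO => _ mO _.
rewrite (_ : (fun w => _) = fun w => \sum_i \sum_k C i k * O w k i); last first.
  by apply/funext => w; rewrite mxtrace_mulE.
by do 2![apply: measurable_sum => ?]; apply: measurable_funM.
Qed.

Lemma measurable_comp_mxtrace_mul (g : R -> R) (C : 'M[R]_n) : continuous g ->
  measurable_fun setT (fun w => g (\tr (C *m O w))).
Proof.
move=> cg; exact: measurableT_comp (continuous_measurable_fun cg)
  (measurable_mxtrace_mul C).
Qed.

Lemma bounded_comp_mxtrace_mul (g : R -> R) (C : 'M[R]_n) : continuous g ->
  bounded_fun (fun w => g (\tr (C *m O w))).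
Proof.
move=> cg; have [B hB] := continuous_bounded_on_ball (\sum_i \sum_k `|C i k|) cg.
by exists B => w; apply/hB/norm_mxtrace_mul_orthogonal_le.
Qed.

Lemma haar_invariant_bounded_on_orthogonal (h : 'M[R]_n -> R) (C : R)
    (U : 'M[R]_n) : orthogonal_mx U -> continuous h ->
  (forall M, orthogonal_mx M -> `|h M| <= C) ->
  (\int[P]_w (h (U *m O w))%:E = \int[P]_w (h (O w))%:E)%E.
Proof.
move=> oU ch hC; case: hO => _ _ inv.
have C0 : 0 <= C := le_trans (normr_ge0 _) (hC _ (O_orthogonal point)).
(* Haar invariance only covers bounded test functions, so truncate h at level C. *)
pose g M := Num.max (- C) (Num.min C (h M)).
have gE M : orthogonal_mx M -> g M = h M.
  by move=> /hC; rewrite ler_norml => /andP[hl hr]; rewrite /g min_r // max_r.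
have cg : continuous g.
  move=> M; apply: (@continuous_max _ _ (fun=> - C) (fun M => Num.min C (h M))).
    exact: cst_continuous.
  apply: (@continuous_min _ _ (fun=> C) h); [exact: cst_continuous | exact: ch].
have bg : exists C', forall M, `|g M| <= C'.
  exists C => M; rewrite ler_norml le_max lexx ge_max ge_min lexx /= andbT.
  by rewrite (@le_trans _ _ 0) // oppr_le0.
rewrite [LHS](eq_integral (fun w => (g (U *m O w))%:E)) => [|w _]; last first.
  by rewrite gE //; exact: orthogonal_mxM.
rewrite [RHS](eq_integral (fun w => (g (O w))%:E)) => [|w _]; last by rewrite gE.
exact: inv.
Qed.

Variables (A : 'M[R]_n) (f : R -> R).
Hypothesis hf : forall x, derivable f x 1.
Hypothesis hf1 : forall x, derivable (derive1 f) x 1.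

Let cf : continuous f := derivable_continuous hf.
Let cf1 : continuous (derive1 f) := derivable_continuous hf1.

Definition stein_stat (K M : 'M[R]_n) := f (\tr (A *m M)) * \tr (A *m K *m M).

Definition stein_term (K : 'M[R]_n) (w : T) :=
  f (\tr (A *m O w)) * \tr (A *m K *m K *m O w) +
  \tr (A *m K *m O w) * (derive1 f (\tr (A *m O w)) * \tr (A *m K *m O w)).

Lemma stein_stat_rot_mx K M t : K *m (K *m K) = - K ->
  stein_stat K (rot_mx K t *m M) =
  stein_path f (\tr (A *m M)) (\tr (A *m K *m M)) (\tr (A *m K *m K *m M)) t.
Proof.
by move=> cubeK; rewrite /stein_stat mxtrace_mul_rot_mx mxtrace_mul_rot_mx_skew.
Qed.

Lemma stein_term_stein_path1 K w : stein_term K w =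
  stein_path1 f (\tr (A *m O w)) (\tr (A *m K *m O w)) (\tr (A *m K *m K *m O w)) 0.
Proof. by rewrite /stein_path1 rot_path0 !rot_path10. Qed.

Lemma continuous_stein_stat K : continuous (stein_stat K).
Proof.
move=> M; apply: (@cvgM _ _ (nbhs M) _ (fun M => f (\tr (A *m M)))
  (fun M => \tr (A *m K *m M))); last exact: continuous_mxtrace_mul.
apply: (@continuous_comp _ _ _ (fun M => \tr (A *m M)) f).
  exact: continuous_mxtrace_mul.
exact: cf.
Qed.

Lemma stein_stat_bounded_on_orthogonal K :
  exists C, forall M, orthogonal_mx M -> `|stein_stat K M| <= C.
Proof.
have [F0 hF0] := continuous_bounded_on_ball (\sum_i \sum_k `|A i k|) cf.
exists (F0 * \sum_i \sum_k `|(A *m K) i k|) => M oM; rewrite normrM.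
by apply: ler_pM; rewrite ?hF0 ?norm_mxtrace_mul_orthogonal_le.
Qed.

Lemma measurable_stein_stat K U :
  measurable_fun setT (fun w => stein_stat K (U *m O w)).
Proof.
rewrite /stein_stat; under eq_fun do rewrite !mulmxA.
by apply: measurable_funM; [exact: measurable_comp_mxtrace_mul|
  exact: measurable_mxtrace_mul].
Qed.

Lemma measurable_stein_term K : measurable_fun setT (stein_term K).
Proof.
have mtr C := measurable_mxtrace_mul C.
have mf := measurable_comp_mxtrace_mul A cf.
have mf1 := measurable_comp_mxtrace_mul A cf1.
by apply: measurable_funD; apply: measurable_funM => //; exact: measurable_funM.
Qed.

Lemma integrable_stein_term K : P.-integrable setT (EFin \o stein_term K).
Proof.
have btr C : bounded_fun (fun w => \tr (C *m O w)).
  exact: (@bounded_comp_mxtrace_mul id C (fun=> cvg_id)).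
apply: integrable_bounded_fun; first exact: measurable_stein_term.
apply: bounded_funD; apply: bounded_funM => //; first exact: bounded_comp_mxtrace_mul.
by apply: bounded_funM => //; exact: bounded_comp_mxtrace_mul.
Qed.

Lemma integral_stein_term_eq0 K : K^T = - K -> K *m (K *m K) = - K ->
  (\int[P]_w (stein_term K w)%:E = 0)%E.
Proof.
move=> skK cubeK.
pose sa (C : 'M[R]_n) := \sum_i \sum_k `|C i k|.
pose S := Num.max (sa A) (Num.max (sa (A *m K)) (sa (A *m K *m K))).
have hS C w : `|\tr (C *m O w)| <= sa C.
  exact/norm_mxtrace_mul_orthogonal_le/O_orthogonal.
have [C1 hC1] := stein_path1_bounded hf hf1 S.
have [Ch hCh] := stein_stat_bounded_on_orthogonal K.
rewrite (eq_integral (fun w => (stein_path1 f (\tr (A *m O w))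
  (\tr (A *m K *m O w)) (\tr (A *m K *m K *m O w)) 0)%:E)); last first.
  by move=> w _; rewrite stein_term_stein_path1.
apply: (integral_derive_eq0 (F := fun t w => stein_path f (\tr (A *m O w))
  (\tr (A *m K *m O w)) (\tr (A *m K *m K *m O w)) t) (C := C1)
  (DF := fun t w => stein_path1 f (\tr (A *m O w))
  (\tr (A *m K *m O w)) (\tr (A *m K *m K *m O w)) t)).
- move=> t; under eq_fun do rewrite -stein_stat_rot_mx //.
  apply: integrable_bounded_fun; first exact: measurable_stein_stat.
  exists Ch => w; apply/hCh/orthogonal_mxM; last exact: O_orthogonal.
  exact: rot_mx_orthogonal.
- by move=> t w; exact: is_derive_stein_path.
- rewrite (_ : (fun w => _) = stein_term K); first exact: measurable_stein_term.
  by apply/funext => w; rewrite stein_term_stein_path1.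
- by move=> t w; apply: hC1; rewrite /S !le_max hS ?orbT.
- move=> t; under eq_fun do rewrite -stein_stat_rot_mx //.
  rewrite (haar_invariant_bounded_on_orthogonal (C := Ch)) //; last first.
  + exact: continuous_stein_stat.
  + exact: rot_mx_orthogonal.
  by apply: eq_integral => w _; rewrite -stein_stat_rot_mx // rot_mx0 mul1mx.
Qed.

Lemma sum_stein_term w : \tr (A *m A^T) = n%:R ->
  \sum_i \sum_j stein_term (skew_unit R i j) w =
  (derive1 f (\tr (A *m O w)) * (n%:R - p2 (A *m O w)) -
   (n%:R - 1) * (\tr (A *m O w) * f (\tr (A *m O w)))) *+ 2.
Proof.
move=> hA; have oO := O_orthogonal w.
have tr_sqr : \tr (O w *m A *m (O w *m A)^T) = n%:R.
  by rewrite trmx_mul !mulmxA mxtrace_mulC !mulmxA (mulmx1C oO) mul1mx.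
have tr_p2 : \tr (O w *m A *m (O w *m A)) = p2 (A *m O w).
  by rewrite /p2 -!mulmxA mxtrace_mulC !mulmxA.
transitivity (f (\tr (A *m O w)) *
    \sum_i \sum_j \tr (A *m skew_unit R i j *m skew_unit R i j *m O w) +
  derive1 f (\tr (A *m O w)) *
    \sum_i \sum_j \tr (A *m skew_unit R i j *m O w) ^+ 2).
  rewrite !mulr_sumr -big_split /=; apply: eq_bigr => i _.
  rewrite !mulr_sumr -big_split /=; apply: eq_bigr => j _.
  by rewrite /stein_term; ring.
rewrite sum_mxtrace_mul_skew_unit_sqr sum_mxtrace_mul_skew_unit_exp2 tr_sqr tr_p2.
ring.
Qed.

Lemma integral_sum_stein_term :
  (\int[P]_w (\sum_i \sum_j stein_term (skew_unit R i j) w)%:E = 0)%E.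
Proof.
have iK K := integrable_stein_term K.
under eq_integral do rewrite -sumEFin; under eq_integral do under eq_bigr do
  rewrite -sumEFin.
rewrite integral_sum //; last first.
  by move=> i; apply: integrable_sum => // j _; exact: iK.
apply: big1 => i _; rewrite integral_sum // => [|j]; last exact: iK.
apply: big1 => j _.
by apply: integral_stein_term_eq0; [exact: trmx_skew_unit | exact: skew_unit_cube].
Qed.

Lemma stein_identity_haar_orthogonal : (2 <= n)%N -> \tr (A *m A^T) = n%:R ->
  let W := fun w => \tr (A *m O w) in
  (\int[P]_w ((derive1 f (W w) - W w * f (W w))%:E)
   = \int[P]_w (((p2 (A *m O w) - 1) / (n%:R - 1) * derive1 f (W w))%:E))%E.
Proof.
move=> n2 hA W; have n1 : n%:R - 1 != 0 :> R.
  by rewrite subr_eq0 pnatr_eq1; case: n n2 {hA W} => [|[]].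
pose c := ((n%:R - 1) *+ 2)^-1 : R.
pose G w := \sum_i \sum_j stein_term (skew_unit R i j) w.
pose L w := derive1 f (W w) - W w * f (W w).
have iL : P.-integrable setT (EFin \o L).
  apply: integrable_bounded_fun.
    apply: measurable_funB; first exact: measurable_comp_mxtrace_mul.
    apply: measurable_funM; first exact: measurable_mxtrace_mul.
    exact: measurable_comp_mxtrace_mul.
  apply: bounded_funD; first exact: bounded_comp_mxtrace_mul.
  apply/bounded_funN/bounded_funM; last exact: bounded_comp_mxtrace_mul.
  exact: (@bounded_comp_mxtrace_mul id A (fun=> cvg_id)).
have iG : P.-integrable setT (EFin \o G).
  rewrite (_ : EFin \o G = fun w => \sum_i \sum_j (stein_term (skew_unit R i j) w)%:E).
    by apply: integrable_sum => // i _; apply: integrable_sum => // j _;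
      exact: integrable_stein_term.
  by apply/funext => w; under [RHS]eq_bigr do rewrite sumEFin; rewrite sumEFin.
have icG : P.-integrable setT (EFin \o (fun w => c * G w)).
  rewrite (_ : EFin \o _ = fun w => (c%:E * (G w)%:E)%E).
    exact: integrableZl.
  by apply/funext => w; rewrite /= EFinM.
rewrite [RHS](eq_integral (fun w => (L w)%:E - (c * G w)%:E)%E) => [|w _]; last first.
  rewrite -EFinB /G sum_stein_term // /L; congr EFin.
  by rewrite /c /W /=; field.
rewrite [RHS]integralB_EFin //.
rewrite [X in (_ - X)%E](eq_integral (fun w => (c%:E * (G w)%:E)%E)) => [|w _]; last first.
  by rewrite EFinM.
by rewrite integralZl // integral_sum_stein_term mule0 sube0.
Qed.

End haar.

Unset Implicit Arguments.

Theorem mainTheorem4 (R : realType) (n : nat) (A : 'M[R]_n)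
    (d : measure_display) (T : measurableType d) (P : probability T R)
    (O : T -> 'M[R]_n) (f : R -> R) :
  (2 <= n)%N ->
  \tr (A *m A^T) = n%:R ->
  haar_orthogonal P O ->
  (forall x, derivable f x 1) ->
  (forall x, derivable (derive1 f) x 1) ->
  (exists M : R, forall x, `|derive1n 2 f x| <= M) ->
  let W := fun w => \tr (A *m O w) in
  (\int[P]_w (((derive1 f) (W w) - W w * f (W w))%:E)
   = \int[P]_w (((p2 (A *m O w) - 1) / (n%:R - 1) * (derive1 f) (W w))%:E))%E.
Proof.
move=> n2 hA hO hf hf1 _.
exact: stein_identity_haar_orthogonal.
Qed.
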